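(* Let $n\ge 3$ and let $(u,v)$ be an MAB pair of binary words with $|u|=|v|=n$. Put $i=\mathrm{lsb}(u,v)$ and $j=\mathrm{lsb}(v,u)$. Then $i+j>n$ if and only if there exist $\alpha,\gamma,\beta,\beta',\gamma',\alpha'\in\Sigma^+$ such that $u=\alpha\gamma\beta$, $v=\beta'\gamma'\alpha'$, $\alpha\gamma\sim_{\mathrm{abl}}\gamma'\alpha'$, $\gamma\beta\sim_{\mathrm{abl}}\beta'\gamma'$, $|\alpha\gamma|=j$, $|\gamma\beta|=i$, and both $(\gamma\beta,\beta'\gamma')$ and $(\alpha\gamma,\gamma'\alpha')$ are MAU pairs.
   Context: Let $\Sigma=\{a,b\}$. For a word $w$ and a letter $c$, $|w|_c$ denotes the number of occurrences of $c$ in $w$. Two words $x,y$ are abelian equivalent, written $x\sim_{\mathrm{abl}}y$, if $|x|_c=|y|_c$ for all $c\in\Sigma$. For words $u,v$: a pair $(x,y)$ is an internal abelian-border of $(u,v)$ if $x$ is a nonempty proper suffix of $u$, $y$ is a proper prefix of $v$, and $x\sim_{\mathrm{abl}}y$; it is an external abelian-border of $(u,v)$ if $x$ is a nonempty proper prefix of $u$, $y$ is a proper suffix of $v$, and $x\sim_{\mathrm{abl}}y$. The pair $(u,v)$ is mutually abelian-bordered (MAB) if it has both an internal and an external abelian-border, and mutually abelian-unbordered (MAU) if it has neither. If $(u,v)$ has an internal abelian-border, $\mathrm{sb}(u,v)$ denotes its internal abelian-border $(x,y)$ of minimal length and $\mathrm{lsb}(u,v)=|x|$ is that minimal length. *)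

From HB Require Import structures.
From mathcomp Require Import all_boot.
Set Implicit Arguments. Unset Strict Implicit. Unset Printing Implicit Defensive.

Inductive letter := La | Lb.
Definition letter_eqb (x y : letter) : bool :=
  match x, y with La, La | Lb, Lb => true | _, _ => false end.
Lemma letter_eqP : Equality.axiom letter_eqb.
Proof. by case; case; constructor. Qed.
HB.instance Definition _ := hasDecEq.Build letter letter_eqP.

Definition word := seq letter.

Definition abel_eq (x y : word) : Prop :=
  forall c : letter, count_mem c x = count_mem c y.

Definition int_border (u v x y : word) : Prop :=
  [/\ x != [::], suffix x u, size x < size u,
      prefix y v & size y < size v] /\ abel_eq x y.

Definition ext_border (u v x y : word) : Prop :=
  [/\ x != [::], prefix x u, size x < size u,
      suffix y v & size y < size v] /\ abel_eq x y.

Definition has_int_border (u v : word) : Prop := exists x y, int_border u v x y.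
Definition has_ext_border (u v : word) : Prop := exists x y, ext_border u v x y.

Definition MAB (u v : word) : Prop := has_int_border u v /\ has_ext_border u v.
Definition MAU (u v : word) : Prop := ~ has_int_border u v /\ ~ has_ext_border u v.

Definition is_lsb (u v : word) (i : nat) : Prop :=
  (exists x y, int_border u v x y /\ size x = i) /\
  (forall x y, int_border u v x y -> i <= size x).

From mathcomp Require Import all_boot.
From mathcomp Require Import zify.
Set Implicit Arguments. Unset Strict Implicit.

(* A border of a pair of words of length n is determined by its length, so the
   minimal internal borders are (drop (n - i) u, take i v) and
   (drop (n - j) v, take j u).  When i + j > n the two prefixes take j u and
   take i v overlap the corresponding suffixes in a nonempty middle factor of
   length i + j - n, which yields the factorisations.  Minimality makes both
   borders MAU pairs: an internal border of the border is a shorter internal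
   border of (u, v), and removing an external border from it leaves one. *)

Lemma size_count_letters (s : word) : size s = count_mem La s + count_mem Lb s.
Proof. by elim: s => //= -[] s IH /=; rewrite IH; lia. Qed.

Lemma abel_eq_size x y : abel_eq x y -> size x = size y.
Proof. by move=> xy; rewrite !size_count_letters !xy. Qed.

Lemma abel_eq_sym x y : abel_eq x y -> abel_eq y x.
Proof. by move=> xy c; rewrite xy. Qed.

Lemma int_border_size u v x y : int_border u v x y -> size y = size x.
Proof. by case=> _ /abel_eq_size. Qed.

Lemma int_border_swap u v x y : int_border u v x y -> ext_border v u y x.
Proof.
move=> [[x0 sx ltx py lty] xy]; split; last exact: abel_eq_sym.
by split=> //; rewrite -size_eq0 -(abel_eq_size xy) size_eq0.
Qed.

Lemma ext_border_swap u v x y : ext_border u v x y -> int_border v u y x.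
Proof.
move=> [[x0 px ltx sy lty] xy]; split; last exact: abel_eq_sym.
by split=> //; rewrite -size_eq0 -(abel_eq_size xy) size_eq0.
Qed.

Lemma MAU_sym p q : MAU p q -> MAU q p.
Proof.
move=> [noint noext]; split.
- by move=> [x [y /int_border_swap b]]; apply: noext; exists y, x.
- by move=> [x [y /ext_border_swap b]]; apply: noint; exists y, x.
Qed.

Lemma int_border_trans u v p q x y :
  int_border u v p q -> int_border p q x y -> int_border u v x y.
Proof.
move=> [[_ sp ltp pq ltq] _] [[x0 sx ltx py lty] xy].
split=> //; split=> //; [exact: suffix_trans sx sp | lia |
  exact: prefix_trans py pq | lia].
Qed.

(* Writing (p, q) = (x x', y' y), the residue (x', y') is again an internal
   border of (u, v). *)
Lemma ext_border_residual u v p q x y :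
  int_border u v p q -> ext_border p q x y ->
  exists x' y', int_border u v x' y' /\ size x' < size p.
Proof.
move=> [[_ sp ltp pq ltq] pq_abel] [[x0 /prefixP[x' Ep] ltx /suffixP[y' Eq] _] xy].
change word in x'; change word in y'.
have x'y' : abel_eq x' y'.
  by move=> c; have := pq_abel c; rewrite Ep Eq !count_cat (xy c); lia.
have Sp : size p = size x + size x' by rewrite Ep size_cat.
have Sq : size q = size y' + size y by rewrite Eq size_cat.
have Sxy := abel_eq_size xy; have Sx'y' := abel_eq_size x'y'.
have Spq := abel_eq_size pq_abel.
have x_pos : 0 < size x by rewrite lt0n size_eq0.
exists x', y'; split; last lia.
split=> //; split; last lia.
- by apply/eqP => x'0; move: ltx; rewrite Ep x'0 cats0 ltnn.
- by apply: suffix_trans sp; rewrite Ep suffix_suffix.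
- lia.
- by apply: prefix_trans pq; rewrite Eq prefix_prefix.
Qed.

Lemma minimal_int_border_MAU u v p q :
  int_border u v p q ->
  (forall x y, int_border u v x y -> size p <= size x) -> MAU p q.
Proof.
move=> pq pq_min; split.
- move=> [x [y xy]]; have /pq_min := int_border_trans pq xy.
  by case: xy => -[_ _ + _ _] _; rewrite ltnNge => /negP.
- move=> [x [y /(ext_border_residual pq)[x' [y' [/pq_min + lt]]]]].
  by rewrite leqNgt lt.
Qed.

Lemma int_border_drop_take u v x y : int_border u v x y ->
  x = drop (size u - size x) u /\ y = take (size x) v.
Proof.
move=> b; have Sy := int_border_size b; case: b => -[_ sx _ py _] _.
by split; apply/esym/eqP; [move: sx; rewrite suffixE | move: py; rewrite prefixE Sy].
Qed.

Lemma lsb_border u v i : is_lsb u v i ->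
  [/\ i < size u, abel_eq (drop (size u - i) u) (take i v)
     & MAU (drop (size u - i) u) (take i v)].
Proof.
move=> [[x [y [b <-]]] b_min]; have := minimal_int_border_MAU b b_min.
by have [<- <-] := int_border_drop_take b; case: b => -[].
Qed.

Lemma take_overlap (T : Type) (s : seq T) n i j :
  size s = n -> n <= i + j -> i <= n ->
  take j s = take (n - i) s ++ take (i + j - n) (drop (n - i) s).
Proof. by move=> *; rewrite -takeD; congr take; lia. Qed.

Lemma size_lt_overlap (T : eqType) (al ga be : seq T) : ga != [::] ->
  size (al ++ ga ++ be) < size (ga ++ be) + size (al ++ ga).
Proof. by case: ga => // g ga _; rewrite !size_cat /=; lia. Qed.

Theorem mainTheorem3 (n : nat) (u v : word) (i j : nat) :
  3 <= n -> size u = n -> size v = n -> MAB u v ->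
  is_lsb u v i -> is_lsb v u j ->
  (n < i + j <->
   exists alpha gamma beta beta' gamma' alpha' : word,
     [/\ alpha != [::], gamma != [::], beta != [::],
         beta' != [::] & gamma' != [::]] /\ alpha' != [::] /\
     u = alpha ++ gamma ++ beta /\ v = beta' ++ gamma' ++ alpha' /\
     abel_eq (alpha ++ gamma) (gamma' ++ alpha') /\
     abel_eq (gamma ++ beta) (beta' ++ gamma') /\
     size (alpha ++ gamma) = j /\ size (gamma ++ beta) = i /\
     MAU (gamma ++ beta) (beta' ++ gamma') /\
     MAU (alpha ++ gamma) (gamma' ++ alpha')).
Proof.
move=> _ Su Sv _ /lsb_border[lt_i ab_i mau_i] /lsb_border[lt_j ab_j mau_j].
rewrite Su in lt_i ab_i mau_i; rewrite Sv in lt_j ab_j mau_j.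
split; last first.
  move=> [al [ga [be [_ [_ [_ [[_ ga0 _ _ _] [_ [Eu [_ [_ [_ [Sj [Si _]]]]]]]]]]]]]].
  by rewrite -Sj -Si -Su Eu; apply: size_lt_overlap.
move=> ij; set c := i + j - n.
have Eu : take j u = take (n - i) u ++ take c (drop (n - i) u).
  by apply: take_overlap => //; lia.
have Ev : take i v = take (n - j) v ++ take c (drop (n - j) v).
  by rewrite /c addnC; apply: take_overlap => //; lia.
exists (take (n - i) u), (take c (drop (n - i) u)), (drop c (drop (n - i) u)),
  (take (n - j) v), (take c (drop (n - j) v)), (drop c (drop (n - j) v)).
rewrite !cat_take_drop -Eu -Ev.
have nonempty (s : word) : 0 < size s -> s != [::] by case: s.
split; first by split; apply: nonempty;
  rewrite !(size_take_min, size_drop) ?Su ?Sv; lia.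
split; first by apply: nonempty; rewrite !size_drop Sv; lia.
do 2 split=> //; split; first exact: abel_eq_sym.
split; first exact: ab_i.
split; first by rewrite size_takel ?Su //; lia.
split; first by rewrite size_drop Su; lia.
by split; [exact: mau_i | exact: MAU_sym].
Qed.
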